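(* In the setting below, the image of $\rho\colon G\to A$ is a normal subgroup of $A$.
   Context: Let $G$ be a group generated by $a_1,\dots,a_n$ with $z=a_1\cdots a_n$ central. Let $S_1,\dots,S_m\subseteq\{1,\dots,n\}$ with $|S_i\cap S_r|\le1$ for $i\neq r$. For $S\subseteq\{1,\dots,n\}$ let $G_S$ be the quotient of $G$ by the normal closure of $\{a_j: j\notin S\}$; let $a_{ij}$ be the image of $a_j$ in $G_{S_i}$ (so $a_{ij}=1$ if $j\notin S_i$) and $z_i=a_{i1}\cdots a_{in}$, which is central in $G_{S_i}$. Let $\bar G=G/\langle z\rangle$, $\bar G_{S_i}=G_{S_i}/\langle z_i\rangle$, and assume each $\bar G_{S_i}$ is free of rank $|S_i|-1$, the images of any $|S_i|-1$ of the $a_{ij}$, $j\in S_i$, forming a free basis. Let $A=\prod_{i=1}^mG_{S_i}$, $\bar A=\prod_{i=1}^m\bar G_{S_i}$, $\rho\colon G\to A$ the product of the projections, and $\bar\rho\colon\bar G\to\bar A$ the induced homomorphism. *)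

From mathcomp Require Import all_boot.
Set Implicit Arguments. Unset Strict Implicit. Unset Printing Implicit Defensive.

Record group := Group {
  gcar :> Type;
  gmul : gcar -> gcar -> gcar;
  gone : gcar;
  ginv : gcar -> gcar;
  gmulA : forall x y z, gmul x (gmul y z) = gmul (gmul x y) z;
  gmul1 : forall x, gmul gone x = x;
  gmulV : forall x, gmul (ginv x) x = gone
}.

Arguments gmul {g}. Arguments gone {g}. Arguments ginv {g}.

Definition is_hom (G H : group) (f : G -> H) : Prop :=
  forall x y, f (gmul x y) = gmul (f x) (f y).

Definition is_subgroup (G : group) (P : G -> Prop) : Prop :=
  [/\ P gone, (forall x y, P x -> P y -> P (gmul x y)) & (forall x, P x -> P (ginv x))].

Definition is_normal_subgroup (G : group) (P : G -> Prop) : Prop :=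
  is_subgroup P /\ (forall g x, P x -> P (gmul g (gmul x (ginv g)))).

Definition gen_by (G : group) (X : G -> Prop) (x : G) : Prop :=
  forall P, is_subgroup P -> (forall y, X y -> P y) -> P x.

Definition ncl (G : group) (X : G -> Prop) (x : G) : Prop :=
  forall P, is_normal_subgroup P -> (forall y, X y -> P y) -> P x.

Definition is_quotient_by (G Q : group) (q : G -> Q) (N : G -> Prop) : Prop :=
  [/\ is_hom q, (forall y, exists x, q x = y) & (forall x, q x = gone <-> N x)].

Definition free_basis (H : group) (I : Type) (b : I -> H) : Prop :=
  forall (K : group) (f : I -> K),
    exists phi : H -> K, [/\ is_hom phi, (forall i, phi (b i) = f i) &
      forall psi : H -> K, is_hom psi -> (forall i, psi (b i) = f i) ->
        forall h, psi h = phi h].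

Definition gprod (G : group) (s : seq G) : G := foldr gmul gone s.

(* The image of [rho] contains every tuple of commutators: each [G_{S_i}] is
   generated by the images of the [a_j], and for distinct [j, k] in [S_i] the
   commutator [[a_j, a_k]] dies in every other factor [G_{S_r}], since [S_r]
   cannot contain both [j] and [k]. Hence the image contains the derived
   subgroup of [A], and a subgroup containing the derived subgroup is normal,
   because [x y x^-1 = [x, y] y]. *)
From mathcomp Require Import all_boot.

Set Implicit Arguments.
Unset Strict Implicit.
Unset Printing Implicit Defensive.

Section GroupTheory.
Variable G : group.
Implicit Types x y : G.

Lemma mulgV x : gmul x (ginv x) = gone.
Proof.
rewrite -[gmul x _]gmul1 -[X in gmul X _](gmulV (ginv x)).
by rewrite -gmulA [gmul (ginv x) (gmul x _)]gmulA gmulV gmul1 gmulV.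
Qed.

Lemma mulg1 x : gmul x gone = x.
Proof. by rewrite -(gmulV x) gmulA mulgV gmul1. Qed.

Lemma mulKg x y : gmul (ginv x) (gmul x y) = y.
Proof. by rewrite gmulA gmulV gmul1. Qed.

Lemma mulKVg x y : gmul x (gmul (ginv x) y) = y.
Proof. by rewrite gmulA mulgV gmul1. Qed.

Lemma invg_unique x y : gmul x y = gone -> ginv x = y.
Proof. by move=> xy1; rewrite -(mulKg x y) xy1 mulg1. Qed.

Lemma invgK x : ginv (ginv x) = x.
Proof. by apply: invg_unique; rewrite gmulV. Qed.

Lemma invMg x y : ginv (gmul x y) = gmul (ginv y) (ginv x).
Proof. by apply: invg_unique; rewrite -gmulA mulKVg mulgV. Qed.

Lemma invg1 : ginv (@gone G) = gone.
Proof. by apply: invg_unique; rewrite gmul1. Qed.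

Definition comm x y := gmul x (gmul y (gmul (ginv x) (ginv y))).

End GroupTheory.

Ltac gsimpl := repeat progress rewrite ?invMg ?invgK ?invg1 ?gmul1 ?mulg1
  ?mulKg ?mulKVg ?gmulV ?mulgV -?gmulA.

Section Commutators.
Variable G : group.
Implicit Types x y w : G.

Lemma comm1g y : comm gone y = gone. Proof. by rewrite /comm; gsimpl. Qed.
Lemma commg1 x : comm x gone = gone. Proof. by rewrite /comm; gsimpl. Qed.
Lemma commgg x : comm x x = gone. Proof. by rewrite /comm; gsimpl. Qed.

Lemma invg_comm x y : ginv (comm x y) = comm y x.
Proof. by rewrite /comm; gsimpl. Qed.

Lemma conjg_comm x y : gmul x (gmul y (ginv x)) = gmul (comm x y) y.
Proof. by rewrite /comm; gsimpl. Qed.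

Lemma commMr w x y :
  comm w (gmul x y) = gmul (comm w x) (gmul x (gmul (comm w y) (ginv x))).
Proof. by rewrite /comm; gsimpl. Qed.

Lemma commVr w x :
  comm w (ginv x) = gmul (ginv x) (gmul (ginv (comm w x)) (ginv (ginv x))).
Proof. by rewrite /comm; gsimpl. Qed.

Lemma normal_comm_subgroup (M : G -> Prop) w :
  is_normal_subgroup M -> is_subgroup (fun u => M (comm w u)).
Proof.
move=> [[M1 MM MV] MJ]; split=> [|u v Mu Mv|u Mu].
- by rewrite commg1.
- by rewrite commMr; apply: MM => //; apply: MJ.
- by rewrite commVr; apply: MJ; apply: MV.
Qed.

Lemma normal_comm_of_generators (X M : G -> Prop) :
  (forall x, gen_by X x) -> is_normal_subgroup M ->
  (forall x y, X x -> X y -> M (comm x y)) -> forall x y, M (comm x y).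
Proof.
move=> genX nM MX x y.
have MXl u v : X u -> M (comm u v).
  move=> Xu; apply: (genX v (fun v => M (comm u v))) => [|w Xw].
    exact: normal_comm_subgroup.
  exact: MX.
apply: (genX y (fun v => M (comm x v))) => [|u Xu].
  exact: normal_comm_subgroup.
by case: nM => [[_ _ MV] _]; rewrite -invg_comm; apply: MV; apply: MXl.
Qed.

End Commutators.

Section Homomorphisms.
Variables (G H : group) (f : G -> H).
Hypothesis f_hom : is_hom f.

Lemma hom1 : f gone = gone.
Proof.
have f1sq : f gone = gmul (f gone) (f gone) by rewrite -f_hom gmul1.
by rewrite -[LHS](mulKg (f gone)) -f1sq gmulV.
Qed.

Lemma homV x : f (ginv x) = ginv (f x).
Proof. by apply/esym/invg_unique; rewrite -f_hom mulgV hom1. Qed.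

Lemma hom_comm x y : f (comm x y) = comm (f x) (f y).
Proof. by rewrite /comm !f_hom !homV. Qed.

Lemma hom_preimage_subgroup (P : H -> Prop) :
  is_subgroup P -> is_subgroup (fun x => P (f x)).
Proof.
move=> [P1 PM PV]; split=> [|x y|x]; first by rewrite hom1.
- by rewrite f_hom; apply: PM.
- by rewrite homV; apply: PV.
Qed.

Lemma surj_hom_gen_by (X : G -> Prop) :
  (forall x, gen_by X x) -> (forall y, exists x, f x = y) ->
  forall y, gen_by (fun v => exists2 u, X u & v = f u) y.
Proof.
move=> genX f_surj y P sP PX; have [x <-] := f_surj y.
apply: (genX x (fun u => P (f u))); first exact: hom_preimage_subgroup.
by move=> u Xu; apply: PX; exists u.
Qed.

End Homomorphisms.

Lemma quotient_kills (G Q : group) (q : G -> Q) (X : G -> Prop) x :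
  is_quotient_by q (ncl X) -> X x -> q x = gone.
Proof. by move=> [_ _ /(_ x) [_ ncl_q]] Xx; apply: ncl_q => P _; apply. Qed.

Section ProductOfQuotients.
Variables (I : finType) (G : group) (GS : I -> group) (pi : forall i, G -> GS i).
Hypothesis pi_hom : forall i, is_hom (pi i).
Hypothesis pi_surj : forall i y, exists x, pi i x = y.

(* [image_in_factor i] is [rho(G) ∩ G_{S_i}], with [G_{S_i}] embedded in [A]
   as the [i]-th factor. *)
Definition image_in_factor i (u : GS i) : Prop :=
  exists h, (forall r, r != i -> pi r h = gone) /\ pi i h = u.

Lemma image_in_factor_normal i : is_normal_subgroup (@image_in_factor i).
Proof.
split; [split|] => [|u v [h1 [e1 <-]] [h2 [e2 <-]]|u [h [e <-]]|y u [h [e <-]]].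
- by exists gone; split=> [r _|]; apply: hom1.
- exists (gmul h1 h2); split=> [r ri|]; last by rewrite pi_hom.
  by rewrite pi_hom e1 // e2 // gmul1.
- exists (ginv h); split=> [r ri|]; last by rewrite homV.
  by rewrite homV // e // invg1.
- have [k <-] := pi_surj y; exists (gmul k (gmul h (ginv k))).
  split=> [r ri|]; last by rewrite !pi_hom homV.
  by rewrite !pi_hom homV // e // gmul1 mulgV.
Qed.

Lemma image_in_factor_tuple (u : forall i, GS i) :
  (forall i, image_in_factor (u i)) -> exists h, forall i, pi i h = u i.
Proof.
move=> Iu.
suff [h Hh] : exists h, forall r, pi r h = if r \in enum I then u r else gone.
  by exists h => i; rewrite Hh mem_enum.
elim: (enum I) (enum_uniq I) => [_|i s IHs /= /andP [i_s us]].
  by exists gone => r; rewrite hom1.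
have [h Hh] := IHs us; have [hi [ei fi]] := Iu i.
exists (gmul hi h) => r; rewrite pi_hom Hh inE.
case: (eqVneq r i) => [->|ri] /=; first by rewrite (negbTE i_s) fi mulg1.
by rewrite ei // gmul1.
Qed.

Lemma image_normal_of_comm :
  (forall i (u v : GS i), image_in_factor (comm u v)) ->
  forall (x : forall i, GS i) g, exists g',
    forall i, gmul (x i) (gmul (pi i g) (ginv (x i))) = pi i g'.
Proof.
move=> Icomm x g.
have [h Hh] := image_in_factor_tuple (fun i => Icomm i (x i) (pi i g)).
by exists (gmul h g) => i; rewrite pi_hom Hh conjg_comm.
Qed.

End ProductOfQuotients.

Lemma card_setI_ge2 (T : finType) (A B : {set T}) j k :
  j != k -> j \in A -> k \in A -> j \in B -> k \in B -> 1 < #|A :&: B|.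
Proof.
move=> jk jA kA jB kB; have <- : #|[set j; k]| = 2 by rewrite cards2 jk.
by apply: subset_leq_card; apply/subsetP => t; rewrite !inE => /orP [] /eqP ->;
  apply/andP.
Qed.

Section Generators.
Variables (G : group) (n m : nat) (a : 'I_n -> G) (S : 'I_m -> {set 'I_n}).
Variables (GS : 'I_m -> group) (pi : forall i, G -> GS i).
Hypothesis pi_hom : forall i, is_hom (pi i).
Hypothesis S_meet : forall i r : 'I_m, i != r -> #|S i :&: S r| <= 1.
Hypothesis pi_kills : forall i j, j \notin S i -> pi i (a j) = gone.

Lemma image_in_factor_comm_generators i j k :
  image_in_factor pi (comm (pi i (a j)) (pi i (a k))).
Proof.
have one : image_in_factor pi (@gone (GS i)).
  by exists gone; split=> [r _|]; apply: hom1.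
have [jS|/pi_kills->] := boolP (j \in S i); last by rewrite comm1g.
have [kS|/pi_kills->] := boolP (k \in S i); last by rewrite commg1.
have [<-|jk] := eqVneq j k; first by rewrite commgg.
exists (comm (a j) (a k)); split=> [r ri|]; last exact: hom_comm.
rewrite hom_comm //.
have [jSr|/pi_kills->] := boolP (j \in S r); last by rewrite comm1g.
have [kSr|/pi_kills->] := boolP (k \in S r); last by rewrite commg1.
by have := S_meet ri; rewrite leqNgt (card_setI_ge2 jk).
Qed.

End Generators.

Theorem mainTheorem11
  (G : group) (n : nat) (a : 'I_n -> G)
  (Hgen : forall x : G, gen_by (fun y => exists j, y = a j) x)
  (Hz : forall x : G,
     gmul (gprod [seq a j | j <- enum 'I_n]) x
     = gmul x (gprod [seq a j | j <- enum 'I_n]))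
  (m : nat) (S : 'I_m -> {set 'I_n})
  (HS : forall i r : 'I_m, i != r -> #|S i :&: S r| <= 1)
  (GS : 'I_m -> group) (pi : forall i, G -> GS i)
  (Hpi : forall i, is_quotient_by (pi i)
           (ncl (fun y => exists j, j \notin S i /\ y = a j)))
  (GSbar : 'I_m -> group) (q : forall i, GS i -> GSbar i)
  (Hq : forall i, is_quotient_by (q i)
           (gen_by (fun y => y = gprod [seq pi i (a j) | j <- enum 'I_n])))
  (Hfree : forall i j0, j0 \in S i ->
     free_basis (fun j : {j : 'I_n | j \in S i :\ j0} => q i (pi i (a (sval j))))) :
  forall (x : forall i, GS i) (g : G), exists g' : G,
    forall i, gmul (x i) (gmul (pi i g) (ginv (x i))) = pi i g'.
Proof.
have pi_hom i : is_hom (pi i) by case: (Hpi i).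
have pi_surj i : forall y, exists x, pi i x = y by case: (Hpi i).
have pi_kills i j : j \notin S i -> pi i (a j) = gone.
  by move=> jS; apply: quotient_kills (Hpi i) _; exists j.
apply: (image_normal_of_comm pi_hom) => i u v.
apply: (normal_comm_of_generators (surj_hom_gen_by (pi_hom i) Hgen (pi_surj i))).
  exact: image_in_factor_normal.
move=> _ _ [_ [j ->] ->] [_ [k ->] ->].
exact: (image_in_factor_comm_generators pi_hom HS pi_kills).
Qed.
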